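(* Let $n$ be a positive odd integer and let $a$ be any integer. Let $q\neq 1$ be a positive real number, and define the $n\times n$ matrix $$Q=\left[q^{-\{\frac{aj-(a+1)k}{n}\}}\right]_{1\leqslant j,k\leqslant n}.$$ Then $$\det(Q)=\left(\frac{a(a+1)}{n}\right)(1-q^{-1})^{n-1}.$$ Moreover, when $\gcd(a(a+1),n)=1$, $$Q^{-1}=\frac{1}{1-q^{-1}}[f(j,k)]_{1\leqslant j,k\leqslant n},$$ where $$f(j,k)=[\![\,n\mid(a+1)j-ak\,]\!]-q^{-1/n}[\![\,n\mid (a+1)j-ak-1\,]\!].$$
   Context: For a real number $x$, $\{x\}=x-\lfloor x\rfloor$ is its fractional part. For a statement $S$, $[\![S]\!]$ equals $1$ if $S$ holds and $0$ otherwise. $q^{-1/n}$ denotes the positive real $n$th root of $q^{-1}$. $\left(\frac{\cdot}{n}\right)$ denotes the Jacobi symbol modulo the positive odd integer $n$ (equal to $0$ when the argument is not coprime to $n$, and $\left(\frac{\cdot}{1}\right)=1$). *)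

From HB Require Import structures.
From mathcomp Require Import all_boot all_order all_algebra.
From mathcomp Require Import all_classical all_reals all_analysis.
Set Implicit Arguments. Unset Strict Implicit. Unset Printing Implicit Defensive.
Import Order.TTheory GRing.Theory Num.Theory.
Local Open Scope ring_scope.

Definition fracpart (R : realType) (x : R) : R := x - (Num.floor x)%:~R.

Definition legendre (m : int) (p : nat) : int :=
  if (p%:Z %| m)%Z then 0
  else if [exists x : 'I_p, ((x%:Z) ^+ 2 == m %[mod p%:Z])%Z] then 1 else -1.

Definition jacobi (m : int) (n : nat) : int :=
  \prod_(p <- primes n) legendre m p ^+ logn p n.

(* The matrix Q, indices j,k in 1..n represented by i : 'I_n as i+1. *)
Definition Qmat (R : realType) (n : nat) (a : int) (q : R) : 'M[R]_n :=
  \matrix_(j < n, k < n)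
    q `^ (- fracpart (((a * (j.+1)%:Z - (a + 1) * (k.+1)%:Z)%:~R : R) / n%:R)).

Definition fmat (R : realType) (n : nat) (a : int) (q : R) : 'M[R]_n :=
  \matrix_(j < n, k < n)
    (((n%:Z %| (a + 1) * (j.+1)%:Z - a * (k.+1)%:Z)%Z)%:R
     - q `^ (- (n%:R)^-1) *
       ((n%:Z %| (a + 1) * (j.+1)%:Z - a * (k.+1)%:Z - 1)%Z)%:R).

From HB Require Import structures.
From mathcomp Require Import all_boot all_order all_algebra.
From mathcomp Require Import all_classical all_reals all_analysis.
From mathcomp Require Import fingroup perm cyclic finfield.
From mathcomp Require Import zify.
Import Order.TTheory GRing.Theory Num.Theory.
Set Implicit Arguments. Unset Strict Implicit. Unset Printing Implicit Defensive.
Local Open Scope ring_scope.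

(* Put x = q^(-1/n), so that x^n = q^-1. The (j, k) entry of Q is x^r, where r is the residue
   of a j - (a + 1) k modulo n, so Q is the circulant C = [x^((u - v) mod n)] with its rows
   reindexed by j |-> a j and its columns by k |-> (a + 1) k modulo n. If gcd(a(a + 1), n) > 1,
   one of these maps is not injective, so Q has two equal rows or columns, and the Jacobi
   symbol vanishes. Otherwise both maps are permutations of Z/n. For the cyclic shift S,
   C (1 - x S) = (1 - x^n) I gives the inverse, a similar triangularisation gives
   det C = (1 - x^n)^(n-1), and the signs of the two permutations multiply to (a(a+1) / n) by
   Zolotarev's lemma: multiplication by c on Z/n has sign (c / n). That lemma is proved for
   primes with a primitive root of F_p, and extended to composite moduli through the
   mixed-radix decomposition Z/mp = Z/m x Z/p. *)

(** * Signs of permutations *)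

Section PermExtension.
Local Open Scope group_scope.
Variables (A T : finType) (h : A -> T).
Hypothesis h_inj : injective h.

Definition ext_perm_fun (s : {perm A}) (t : T) : T :=
  if [pick a | h a == t] is Some a then h (s a) else t.

Lemma im_or_out (t : T) : {a | t = h a} + {forall a, h a != t}.
Proof.
case: (pickP (fun a => h a == t)) => [a /eqP <-|ht]; first by left; exists a.
by right=> a; rewrite ht.
Qed.

Lemma ext_perm_funE s a : ext_perm_fun s (h a) = h (s a).
Proof.
by rewrite /ext_perm_fun; case: pickP => [a' /eqP/h_inj -> //|/(_ a)]; rewrite eqxx.
Qed.

Lemma ext_perm_fun_out s t : (forall a, h a != t) -> ext_perm_fun s t = t.
Proof.
move=> ht; rewrite /ext_perm_fun; case: pickP => [a /eqP ha|//].
by have := ht a; rewrite ha eqxx.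
Qed.

Lemma ext_perm_fun_inj s : injective (ext_perm_fun s).
Proof.
move=> t1 t2; case: (im_or_out t1) => [[a1 ->]|h1];
  case: (im_or_out t2) => [[a2 ->]|h2];
  rewrite ?ext_perm_funE ?ext_perm_fun_out //.
- by move/h_inj/perm_inj->.
- by move=> e; have := h2 (s a1); rewrite e eqxx.
- by move=> e; have := h1 (s a2); rewrite e eqxx.
Qed.

Definition ext_perm s : {perm T} := perm (@ext_perm_fun_inj s).

Lemma ext_permE s a : ext_perm s (h a) = h (s a).
Proof. by rewrite permE ext_perm_funE. Qed.

Lemma ext_perm_out s t : (forall a, h a != t) -> ext_perm s t = t.
Proof. by move=> ht; rewrite permE ext_perm_fun_out. Qed.

Lemma ext_perm_unique (s : {perm A}) (s' : {perm T}) :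
  (forall a, s' (h a) = h (s a)) -> (forall t, (forall a, h a != t) -> s' t = t) ->
  ext_perm s = s'.
Proof.
move=> s'_im s'_out; apply/permP => t.
case: (im_or_out t) => [[a ->]|ht]; first by rewrite ext_permE s'_im.
by rewrite ext_perm_out ?s'_out.
Qed.

Lemma ext_permM s1 s2 : ext_perm (s1 * s2) = ext_perm s1 * ext_perm s2.
Proof.
apply: ext_perm_unique => [a|t ht]; first by rewrite !permM !ext_permE.
by rewrite permM !ext_perm_out.
Qed.

Lemma ext_perm1 : ext_perm 1 = 1.
Proof. by apply: ext_perm_unique => [a|t _]; rewrite !perm1. Qed.

Lemma ext_perm_tperm a1 a2 : ext_perm (tperm a1 a2) = tperm (h a1) (h a2).
Proof.
apply: ext_perm_unique => [a|t ht]; first by rewrite (inj_tperm _ _ _ h_inj).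
by rewrite tpermD // eq_sym.
Qed.

Lemma odd_ext_perm s : odd_perm (ext_perm s) = odd_perm s.
Proof.
have [ts -> dts] := prod_tpermP s.
rewrite (big_morph ext_perm ext_permM ext_perm1).
under eq_bigr do rewrite ext_perm_tperm.
rewrite -(big_map (fun t => (h t.1, h t.2)) xpredT (fun t => tperm t.1 t.2)).
rewrite !odd_perm_prod ?size_map // all_map.
by apply: sub_all dts => -[a1 a2]; rewrite /dpair /= (inj_eq h_inj).
Qed.

End PermExtension.

Lemma odd_permX (T : finType) (s : {perm T}) k :
  odd_perm (s ^+ k)%g = odd k && odd_perm s.
Proof.
elim: k => [|k IHk]; first by rewrite expg0 odd_perm1.
by rewrite expgS odd_permM IHk /=; case: odd_perm; case: odd.
Qed.

Lemma iter_addb n b : iter n (addb b) false = odd n && b.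
Proof. by elim: n => //= n ->; case: b; case: odd. Qed.

Section FibrePerm.
Local Open Scope group_scope.
Variables A B : finType.

Definition fibre_perm_fun (t : A -> {perm B}) (w : A * B) : A * B := (w.1, t w.1 w.2).

Lemma fibre_perm_fun_inj t : injective (fibre_perm_fun t).
Proof. by move=> [u v] [u' v'] [] /= <- /perm_inj ->. Qed.

Definition fibre_perm t : {perm A * B} := perm (@fibre_perm_fun_inj t).

Lemma fibre_permE t u v : fibre_perm t (u, v) = (u, t u v).
Proof. by rewrite permE. Qed.

Lemma odd_fibre_perm t :
  odd_perm (fibre_perm t) = \big[addb/false]_(u : A) odd_perm (t u).
Proof.
have pair_inj (u : A) : injective (pair u : B -> A * B) by move=> v v' [].
pose lift u := ext_perm (pair_inj u) (t u).
have liftE s : uniq s -> forall u v, (\prod_(u' <- s) lift u') (u, v) =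
    if u \in s then (u, t u v) else (u, v).
  elim: s => [_ u v|u' s IHs /andP[u's_notin s_uniq] u v]; first by rewrite big_nil perm1.
  rewrite big_cons permM in_cons; have [->|u'u] := eqVneq u u'.
    by rewrite ext_permE IHs // (negPf u's_notin).
  by rewrite ext_perm_out ?IHs // => v'; apply: contra_neq u'u => -[<-].
have -> : fibre_perm t = \prod_(u <- enum A) lift u.
  by apply/permP => -[u v]; rewrite liftE ?enum_uniq // mem_enum fibre_permE.
rewrite (big_morph _ (@odd_permM _) (odd_perm1 _)) big_enum /=.
by apply: eq_bigr => u _; apply: odd_ext_perm.
Qed.

Lemma odd_fibre_perm_const t b : (forall u, odd_perm (t u) = b) ->
  odd_perm (fibre_perm t) = odd #|A| && b.
Proof.
by move=> tb; rewrite odd_fibre_perm (eq_bigr _ (fun u _ => tb u)) big_const iter_addb.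
Qed.

End FibrePerm.

Section ProdPerm.
Local Open Scope group_scope.
Variables A B : finType.

Definition prod_perm_fun (s : {perm A}) (w : A * B) : A * B := (s w.1, w.2).

Lemma prod_perm_fun_inj s : injective (prod_perm_fun s).
Proof. by move=> [u v] [u' v'] [] /= /perm_inj -> ->. Qed.

Definition prod_perm s : {perm A * B} := perm (@prod_perm_fun_inj s).

Lemma prod_permE s u v : prod_perm s (u, v) = (s u, v).
Proof. by rewrite permE. Qed.

Lemma odd_prod_perm s : odd_perm (prod_perm s) = odd #|B| && odd_perm s.
Proof.
have swap_inj : injective (fun w : A * B => (w.2, w.1)) by move=> [? ?] [? ?] [-> ->].
rewrite -(odd_ext_perm swap_inj) -(odd_fibre_perm_const (t := fun _ : B => s)) //.
congr odd_perm; apply/permP => -[v u].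
by rewrite (ext_permE swap_inj _ (u, v)) prod_permE fibre_permE.
Qed.

End ProdPerm.

(** * Zolotarev's lemma *)

Section ResiduePerm.
Local Open Scope nat_scope.
Variable n : nat.

Lemma ord_gt0 (i : 'I_n) : 0 < n.
Proof. exact: leq_ltn_trans (leq0n i) (ltn_ord i). Qed.

Lemma coprime_mulm_inj c i j : coprime c n -> i < n -> j < n ->
  c * i = c * j %[mod n] -> i = j.
Proof.
move=> c_n i_lt j_lt; wlog ij : i j i_lt j_lt / i <= j.
  move=> wlog_ij eq_ij; have [ij|/ltnW ji] := leqP i j; first exact: wlog_ij.
  exact: esym (wlog_ij j i j_lt i_lt ji (esym eq_ij)).
move/eqP; rewrite eq_sym eqn_mod_dvd ?leq_mul // -mulnBr Gauss_dvdr 1?coprime_sym //.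
by have [|/dvdn_leq le_n] := posnP (j - i); [lia | move/le_n; lia].
Qed.

Definition mul_perm_fun c (i : 'I_n) : 'I_n :=
  if coprime c n then Ordinal (ltn_pmod (c * i) (ord_gt0 i)) else i.

Lemma mul_perm_fun_inj c : injective (mul_perm_fun c).
Proof.
move=> i j; rewrite /mul_perm_fun; case: ifP => // c_n [] eq_ij.
exact: val_inj (coprime_mulm_inj c_n (ltn_ord i) (ltn_ord j) eq_ij).
Qed.

Definition mul_perm c : {perm 'I_n} := perm (@mul_perm_fun_inj c).

Lemma mul_permE c i : coprime c n -> mul_perm c i = (c * i) %% n :> nat.
Proof. by move=> c_n; rewrite permE /mul_perm_fun c_n. Qed.

Definition succ_perm : {perm 'I_n} := perm (@ordS_inj n).

Lemma succ_permX k i : (succ_perm ^+ k)%g i = (i + k) %% n :> nat.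
Proof.
elim: k => [|k IHk]; first by rewrite expg0 perm1 addn0 modn_small.
by rewrite expgSr permM permE /= IHk addnS -addn1 modnDml addn1.
Qed.

Lemma odd_succ_perm : odd n -> odd_perm succ_perm = false.
Proof.
move=> n_odd; pose i0 := Ordinal (odd_gt0 n_odd).
rewrite /odd_perm card_ord n_odd.
suff -> : porbits succ_perm = [set porbit succ_perm i0] by rewrite cards1.
apply/setP => X; rewrite inE; apply/imsetP/eqP => [[i _ ->]|->]; last by exists i0.
apply/eqP; rewrite eq_porbit_mem; apply/porbitP; exists i.
by apply: val_inj; rewrite /= succ_permX /= add0n modn_small.
Qed.

End ResiduePerm.

Section PrimeZolotarev.
Variable p : nat.
Hypotheses (p_pr : prime p) (p_odd : odd p).
Local Notation F := 'F_p.

Lemma odd_prime_pred : odd p.-1 = false.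
Proof. by move: p_odd; rewrite -{1}(prednK (prime_gt0 p_pr)) /= => /negPf. Qed.

Definition scale_perm_fun (c x : F) : F := if c == 0 then x else c * x.

Lemma scale_perm_fun_inj c : injective (scale_perm_fun c).
Proof. by move=> x y; rewrite /scale_perm_fun; case: eqP => // /eqP /mulfI; apply. Qed.

Definition scale_perm c : {perm F} := perm (@scale_perm_fun_inj c).

Lemma scale_permE c x : c != 0 -> scale_perm c x = c * x.
Proof. by move=> c_neq0; rewrite permE /scale_perm_fun (negPf c_neq0). Qed.

Lemma scale_permX c k : c != 0 -> scale_perm (c ^+ k) = (scale_perm c ^+ k)%g.
Proof.
move=> c_neq0; elim: k => [|k IHk]; apply/permP => x.
  by rewrite expg0 perm1 permE /scale_perm_fun expr0 oner_eq0 mul1r.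
by rewrite expgSr permM -IHk !scale_permE ?expf_neq0 // exprS mulrA.
Qed.

Lemma Fp_unity (x : F) : x != 0 -> x ^+ p.-1 = 1.
Proof.
move=> x_neq0; apply: (mulIf x_neq0); rewrite mul1r -exprSr prednK ?prime_gt0 //.
by have := expf_card x; rewrite card_Fp.
Qed.

Lemma Fp_prim_root : exists z : F, (p.-1).-primitive_root z.
Proof.
have p1_gt0 : (0 < p.-1)%N by rewrite ltn_predRL prime_gt1.
pose units := enum (predC1 (0 : F)).
have roots : all (p.-1).-unity_root units.
  by apply/allP => x; rewrite mem_enum unity_rootE => /Fp_unity ->.
have size_roots : (p.-1 <= size units)%N by rewrite -cardE cardC1 card_Fp.
have /hasP[z _ z_prim] := has_prim_root p1_gt0 roots (enum_uniq _) size_roots.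
by exists z.
Qed.

Lemma prim_root_neq0 (z : F) : (p.-1).-primitive_root z -> z != 0.
Proof. by move=> z_prim; rewrite (prim_root_eq0 z_prim) -lt0n ltn_predRL prime_gt1. Qed.

Lemma ltn_Fp (y : F) : (y < p)%N.
Proof. by rewrite -[X in (_ < X)%N](Fp_cast p_pr). Qed.

(* Multiplication by a generator fixes 0 and cycles through the p - 1 units: two orbits on an
   odd number of points. *)
Lemma odd_scale_perm_pow z k : (p.-1).-primitive_root z ->
  odd_perm (scale_perm (z ^+ k)) = odd k.
Proof.
move=> z_prim; have z_neq0 := prim_root_neq0 z_prim.
have powE i x : (scale_perm z ^+ i)%g x = z ^+ i * x.
  by rewrite -scale_permX // scale_permE // expf_neq0.
rewrite scale_permX // odd_permX -[RHS]andbT; congr (_ && _).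
rewrite /odd_perm card_Fp // p_odd.
suff -> : porbits (scale_perm z) = [set porbit (scale_perm z) 0; porbit (scale_perm z) 1].
  rewrite cards2; case: eqP => // orbit01.
  have : (1 : F) \in porbit (scale_perm z) 0 by rewrite orbit01 porbit_id.
  by case/porbitP => i; rewrite powE mulr0 => /eqP; rewrite oner_eq0.
apply/setP => X; rewrite !inE; apply/imsetP/orP => [[x _ ->]|]; last first.
  by case=> /eqP ->; [exists 0 | exists 1].
have [->|x_neq0] := eqVneq x 0; [left | right] => //.
have [i ->] := prim_rootP z_prim (Fp_unity x_neq0).
by rewrite eq_porbit_mem; apply/porbitP; exists i; rewrite powE mulr1.
Qed.

Lemma sqr_prim_pow z k : (p.-1).-primitive_root z ->
  [exists y : F, y ^+ 2 == z ^+ k] = ~~ odd k.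
Proof.
move=> z_prim; have z_neq0 := prim_root_neq0 z_prim.
apply/existsP/idP => [[y /eqP y2]|k_even]; last first.
  by exists (z ^+ k./2); rewrite -exprM muln2 -[X in _ == z ^+ X]odd_double_half (negPf k_even).
have y_neq0 : y != 0 by apply: contra_eq_neq y2 => ->; rewrite expr0n eq_sym expf_neq0.
have [i y_pow] := prim_rootP z_prim (Fp_unity y_neq0).
move: y2; rewrite y_pow -exprM => /eqP; rewrite (eq_prim_root_expr z_prim) => /eqP k_mod.
by rewrite -(odd_mod k odd_prime_pred) -k_mod odd_mod ?odd_prime_pred // oddM andbF.
Qed.

Lemma legendre_prim_pow (c : int) z k : (p.-1).-primitive_root z ->
  c%:~R = z ^+ k :> F -> legendre c p = (-1) ^+ odd k.
Proof.
move=> z_prim c_pow; have z_neq0 := prim_root_neq0 z_prim.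
have dvdpE (m : int) : (p%:Z %| m)%Z = (m%:~R == 0 :> F).
  exact: (dvdz_pcharf (pchar_Fp p_pr)).
rewrite /legendre dvdpE c_pow expf_eq0 (negPf z_neq0) andbF.
suff -> : [exists x : 'I_p, (x%:Z ^+ 2 == c %[mod p])%Z] = [exists y : F, y ^+ 2 == z ^+ k].
  by rewrite sqr_prim_pow //; case: odd.
have sqr_modE (x : nat) : (x%:Z ^+ 2 == c %[mod p])%Z = ((x%:R : F) ^+ 2 == z ^+ k).
  by rewrite eqz_mod_dvd dvdpE rmorphB rmorphXn /= c_pow subr_eq0.
apply/existsP/existsP => [[x]|[y y2]]; first by rewrite sqr_modE => x2; exists x%:R.
by exists (Ordinal (ltn_Fp y)); rewrite sqr_modE natr_Zp.
Qed.

Lemma legendre_mul_perm (c : nat) : coprime c p -> legendre c p = (-1) ^+ mul_perm p c.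
Proof.
move=> c_p; have [z z_prim] := Fp_prim_root.
have c_neq0 : (c%:R : F) != 0.
  by rewrite -(dvdn_pcharf (pchar_Fp p_pr)) -prime_coprime // coprime_sym.
have [k c_pow] := prim_rootP z_prim (Fp_unity c_neq0).
rewrite (legendre_prim_pow (c := c) z_prim c_pow) -(odd_scale_perm_pow k z_prim) -c_pow.
have ordF_inj : injective (fun i : 'I_p => i%:R : F).
  by move=> i j /(congr1 val); rewrite /= !val_Fp_nat // !modn_small //; apply: val_inj.
rewrite -(odd_ext_perm ordF_inj); congr (_ ^+ odd_perm _); apply/permP => y.
rewrite -[y]natr_Zp -[y : nat]/(Ordinal (ltn_Fp y) : nat) ext_permE scale_permE //.
by rewrite mul_permE // Fp_nat_mod // natrM.
Qed.

End PrimeZolotarev.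

Section MixedRadix.
Local Open Scope nat_scope.
Variables m p : nat.

Lemma mixed_radix_lt u v : u < m -> v < p -> u + m * v < m * p.
Proof.
move=> u_lt v_lt; have : m * v.+1 <= m * p by rewrite leq_mul2l v_lt orbT.
by rewrite mulnS; lia.
Qed.

Definition mixed_radix (w : 'I_m * 'I_p) : 'I_(m * p) :=
  Ordinal (mixed_radix_lt (ltn_ord w.1) (ltn_ord w.2)).

Lemma mixed_radix_inj : injective mixed_radix.
Proof.
move=> [u v] [u' v'] /(congr1 val) /= eq_uv.
have m_gt0 : 0 < m := ord_gt0 u.
have /(congr1 (modn^~ m)) := eq_uv; have /(congr1 (divn^~ m)) := eq_uv.
rewrite !(addnC u) !(addnC u') !(mulnC m) !modnMDl !divnMDl //.
by rewrite !modn_small // !divn_small // !addn0 => /val_inj-> /val_inj->.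
Qed.

Lemma mixed_radix_surj (t : 'I_(m * p)) :
  {w | t = mixed_radix w}.
Proof.
have m_gt0 : 0 < m by move: (ord_gt0 t); rewrite muln_gt0 => /andP[].
have t_div_lt : t %/ m < p by rewrite ltn_divLR // (mulnC p).
exists (Ordinal (ltn_pmod t m_gt0), Ordinal t_div_lt); apply: val_inj.
by rewrite /= addnC (mulnC m (t %/ m)) -divn_eq.
Qed.

Lemma mulm_mixed_radix c u v : 0 < m -> 0 < p ->
  (c * (u + m * v)) %% (m * p) =
  (c * u) %% m + m * (((c * v) %% p + (c * u) %/ m) %% p).
Proof.
move=> m_gt0 p_gt0.
have carryE : c * (u + m * v) = (c * u) %% m + m * (((c * v) %% p + (c * u) %/ m) %% p)
    + (((c * v) %% p + (c * u) %/ m) %/ p + (c * v) %/ p) * (m * p).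
  have := divn_eq (c * u) m; have := divn_eq (c * v) p.
  have := divn_eq ((c * v) %% p + (c * u) %/ m) p.
  move: ((c * u) %/ m) ((c * u) %% m) ((c * v) %/ p) ((c * v) %% p) => qu ru qv rv.
  move: ((rv + qu) %/ p) ((rv + qu) %% p) => q r.
  by move=> carryE cvE cuE; rewrite mulnDr mulnCA cuE cvE; nia.
rewrite carryE addnC modnMDl modn_small //.
by apply: mixed_radix_lt; apply: ltn_pmod.
Qed.

End MixedRadix.

(* Writing t = u + m v, multiplication by c on Z/mp is (u, v) |-> (c u mod m, c v + (c u) div m
   mod p): on each fibre, multiplication by c followed by a rotation, then multiplication by c
   on the first coordinate. *)
Lemma odd_mul_perm_mul m p c : odd m -> odd p -> coprime c (m * p) ->
  odd_perm (mul_perm (m * p) c) = odd_perm (mul_perm m c) (+) odd_perm (mul_perm p c).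
Proof.
move=> m_odd p_odd; rewrite coprimeMr => /andP[c_m c_p].
pose fibre (u : 'I_m) : {perm 'I_p} := (mul_perm p c * succ_perm p ^+ ((c * u) %/ m))%g.
have mulE : ext_perm (@mixed_radix_inj m p)
    (fibre_perm fibre * prod_perm _ (mul_perm m c))%g = mul_perm (m * p) c.
  apply/permP => t; have [[u v] ->] := mixed_radix_surj t.
  rewrite ext_permE permM fibre_permE prod_permE; apply: val_inj => /=.
  rewrite permM succ_permX !mul_permE ?coprimeMr ?c_m //.
  by rewrite mulm_mixed_radix ?odd_gt0.
rewrite -mulE odd_ext_perm odd_permM odd_prod_perm !card_ord p_odd addbC.
rewrite (odd_fibre_perm_const (b := odd_perm (mul_perm p c))) ?card_ord ?m_odd // => u.
by rewrite odd_permM odd_permX odd_succ_perm // andbF addbF.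
Qed.

Lemma jacobiE (c : int) n N : (0 < n)%N -> (n < N)%N ->
  jacobi c n = \prod_(0 <= q < N | prime q) legendre c q ^+ logn q n.
Proof.
move=> n_gt0 n_lt; rewrite /jacobi -(filter_pi_of n_lt) big_filter.
rewrite big_mkcond [RHS]big_mkcond.
apply: eq_bigr => q _; rewrite -[\pi(n) q]/(q \in primes n).
case: ifP => [|/negbT]; first by rewrite mem_primes => /andP[->].
by rewrite -logn_gt0 -eqn0Ngt => /eqP->; case: prime.
Qed.

Lemma jacobiM (c : int) m n : (0 < m)%N -> (0 < n)%N ->
  jacobi c (m * n) = jacobi c m * jacobi c n.
Proof.
move=> m_gt0 n_gt0; have mn_gt0 : (0 < m * n)%N by rewrite muln_gt0 m_gt0.
rewrite (jacobiE c mn_gt0 (ltnSn _)) (jacobiE c m_gt0 (_ : m < (m * n).+1)%N); last first.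
  by rewrite ltnS leq_pmulr.
rewrite (jacobiE c n_gt0 (_ : n < (m * n).+1)%N) -?big_split /=; last first.
  by rewrite ltnS leq_pmull.
by apply: eq_bigr => q q_pr; rewrite lognM // exprD.
Qed.

Lemma jacobi_prime (c : int) p : prime p -> jacobi c p = legendre c p.
Proof. by move=> p_pr; rewrite /jacobi primes_prime // big_seq1 logn_prime // eqxx. Qed.

Lemma zolotarev_nat n c : odd n -> coprime c n -> jacobi c n = (-1) ^+ mul_perm n c.
Proof.
elim/ltn_ind: n => n IHn n_odd c_n; have n_gt0 := odd_gt0 n_odd.
have [n_gt1|n_le1] := ltnP 1 n; last first.
  have n1 : n = 1%N by apply/eqP; rewrite eqn_leq n_le1.
  rewrite n1 /jacobi big_nil.
  suff -> : mul_perm 1 c = 1%g by rewrite odd_perm1.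
  by apply/permP => i; rewrite perm1 !ord1.
pose p := pdiv n; have p_pr : prime p := pdiv_prime n_gt1.
pose m := (n %/ p)%N; have n_eq : n = (m * p)%N by rewrite divnK // pdiv_dvd.
have m_gt0 : (0 < m)%N by move: n_gt0; rewrite n_eq muln_gt0 => /andP[].
have m_lt : (m < n)%N by rewrite n_eq ltn_Pmulr ?prime_gt1.
have /andP[m_odd p_odd] : odd m && odd p by rewrite -oddM -n_eq.
have /andP[c_m c_p] : coprime c m && coprime c p by rewrite -coprimeMr -n_eq.
rewrite n_eq (jacobiM _ m_gt0 (prime_gt0 p_pr)) (jacobi_prime c p_pr).
rewrite (legendre_mul_perm p_pr p_odd c_p) IHn //.
by rewrite odd_mul_perm_mul ?coprimeMr ?c_m // signr_addb.
Qed.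

Lemma eq_legendre (c1 c2 : int) (p : nat) :
  (c1 = c2 %[mod p])%Z -> legendre c1 p = legendre c2 p.
Proof. by move=> eq_c; rewrite /legendre !(sameP dvdz_mod0P eqP) eq_c. Qed.

Lemma eq_jacobi (c1 c2 : int) (n : nat) :
  (c1 = c2 %[mod n])%Z -> jacobi c1 n = jacobi c2 n.
Proof.
move=> /eqP eq_c; apply: eq_big_seq => p; rewrite mem_primes => /and3P[_ _ p_n].
by congr (_ ^+ _); apply/eq_legendre/eqP; move: eq_c; rewrite !eqz_mod_dvd; apply: dvdz_trans.
Qed.

Lemma gcdn_gt1_not_coprimez (c : int) (n : nat) : (0 < n)%N -> ~~ coprimez c n ->
  (1 < gcdn `|c| n)%N.
Proof.
move=> n_gt0 c_n; rewrite ltn_neqAle gcdn_gt0 n_gt0 orbT andbT eq_sym.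
by apply: contra c_n => /eqP g1; rewrite /coprimez /gcdz g1.
Qed.

Lemma jacobi_eq0 (c : int) n : (0 < n)%N -> ~~ coprimez c n -> jacobi c n = 0.
Proof.
move=> n_gt0 c_n; set g := gcdn `|c| n.
have g_gt1 : (1 < g)%N := gcdn_gt1_not_coprimez n_gt0 c_n.
have p_pr := pdiv_prime g_gt1; have p_g := pdiv_dvd g.
have p_n : (pdiv g %| n)%N by apply: dvdn_trans p_g (dvdn_gcdr _ _).
have p_c : (pdiv g %| c)%Z by rewrite dvdzE (dvdn_trans p_g (dvdn_gcdl _ _)).
apply/eqP; rewrite prodf_seq_eq0; apply/hasP; exists (pdiv g).
  by rewrite mem_primes p_pr n_gt0.
by rewrite /legendre p_c expf_eq0 eqxx andbT logn_gt0 mem_primes p_pr n_gt0.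
Qed.

Section IntResidues.
Variable n : nat.
Hypothesis n_gt0 : (0 < n)%N.

Lemma absz_modz (z : int) : `|(z %% n)%Z|%:Z = (z %% n)%Z.
Proof. by rewrite gez0_abs // modz_ge0 // -lt0n. Qed.

Lemma absz_modz_lt (z : int) : (`|(z %% n)%Z| < n)%N.
Proof. by rewrite -ltz_nat absz_modz ltz_pmod. Qed.

Lemma coprime_absz_modz (c : int) : coprimez c n -> coprime `|(c %% n)%Z| n.
Proof. by rewrite /coprimez -gcdz_modl. Qed.

Definition zmul_perm (c : int) : {perm 'I_n} := mul_perm n `|(c %% n)%Z|.

Lemma zmul_permE c i : coprimez c n -> (zmul_perm c i)%:Z = ((c * i) %% n)%Z.
Proof.
move/coprime_absz_modz => c_n.
by rewrite mul_permE // -modz_nat PoszM absz_modz modzMml.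
Qed.

Lemma zmul_permM b c : coprimez b n -> coprimez c n ->
  zmul_perm (b * c) = (zmul_perm c * zmul_perm b)%g.
Proof.
move=> b_n c_n; apply/permP => i; apply/val_inj/eqP; rewrite /= -eqz_nat permM.
by rewrite !zmul_permE ?coprimezMl ?b_n // modzMmr mulrA.
Qed.

Lemma zolotarev (c : int) : odd n -> coprimez c n -> jacobi c n = (-1) ^+ zmul_perm c.
Proof.
move=> n_odd c_n; rewrite -zolotarev_nat ?coprime_absz_modz //.
by apply: eq_jacobi; rewrite absz_modz modz_mod.
Qed.

Lemma jacobi_zmul_perm (b c : int) : odd n -> coprimez b n -> coprimez c n ->
  jacobi (b * c) n = (-1) ^+ zmul_perm b * (-1) ^+ zmul_perm c.
Proof.
move=> n_odd b_n c_n.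
by rewrite zolotarev ?coprimezMl ?b_n // zmul_permM // odd_permM signr_addb mulrC.
Qed.

End IntResidues.

Definition mul_succ_ord n (c : int) (j : 'I_n) : 'I_n :=
  Ordinal (absz_modz_lt (ord_gt0 j) (c * j.+1%:Z)).

Lemma mul_succ_ordE n (c : int) (j : 'I_n) :
  (mul_succ_ord c j)%:Z = ((c * j.+1%:Z) %% n)%Z.
Proof. exact: absz_modz (ord_gt0 j) _. Qed.

Lemma mul_succ_ord_perm (n : nat) (c : int) : coprimez c n ->
  mul_succ_ord c =1 (succ_perm n * zmul_perm n c)%g.
Proof.
move=> c_n j; apply/val_inj/eqP; rewrite /= -eqz_nat permM zmul_permE ?(ord_gt0 j) //.
by rewrite mul_succ_ordE permE /= -modz_nat modzMmr.
Qed.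

Lemma mul_succ_ord_collision (n : nat) (c : int) : (0 < n)%N -> ~~ coprimez c n ->
  exists i1 i2 : 'I_n, i1 != i2 /\ mul_succ_ord c i1 = mul_succ_ord c i2.
Proof.
move=> n_gt0 c_n; set g := gcdn `|c| n.
have g_gt1 : (1 < g)%N := gcdn_gt1_not_coprimez n_gt0 c_n.
(* Both n and n / g are sent to 0. *)
have g_n : (g %| n)%N := dvdn_gcdr _ _.
have g_le : (g <= n)%N by apply: dvdn_leq.
have ng_gt0 : (0 < n %/ g)%N by rewrite divn_gt0 // ltnW.
have ng_lt : (n %/ g < n)%N by rewrite ltn_Pdiv.
have ord_pred (k : nat) : (0 < k)%N -> (k <= n)%N -> (k.-1 < n)%N by case: k.
pose i1 := Ordinal (ord_pred n n_gt0 (leqnn n)).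
pose i2 := Ordinal (ord_pred _ ng_gt0 (ltnW ng_lt)).
exists i1, i2; split.
  by rewrite -val_eqE /= -(inj_eq succn_inj) !prednK // neq_ltn ng_lt orbT.
have /dvdzP[c' c_eq] : (g %| c)%Z by rewrite dvdzE dvdn_gcdl.
apply/val_inj/eqP; rewrite -eqz_nat !mul_succ_ordE /= !prednK // modzMl.
by rewrite c_eq -mulrA -PoszM mulnC divnK // modzMl.
Qed.

(** * Circulant matrices *)

Lemma ordS_modz n (i : 'I_n) : (ordS i)%:Z = ((i%:Z + 1) %% n)%Z.
Proof. by rewrite /= -modz_nat -addn1 PoszD. Qed.

Lemma sumr_mul_eq (R : nzSemiRingType) (I : finType) (F : I -> R) i0 :
  \sum_i F i * (i == i0)%:R = F i0.
Proof.
by rewrite (bigD1 i0) //= eqxx mulr1 big1 ?addr0 // => i /negPf->; rewrite mulr0.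
Qed.

Lemma mx_subZE (R : pzRingType) m n (A B : 'M[R]_(m, n)) c i j :
  (A - c *: B) i j = A i j - c * B i j.
Proof. by rewrite !mxE. Qed.

Section Circulant.
Variables (R : comNzRingType) (x : R) (n : nat).

Definition circulant : 'M[R]_n := \matrix_(u, v) x ^+ `|((u%:Z - v%:Z) %% n)%Z|.

Definition shift_mx : 'M[R]_n := \matrix_(u, v) (u == ordS v)%:R.

Lemma modz_ord_sub_eq0 (u v : 'I_n) : ((u%:Z - v%:Z) %% n == 0)%Z = (u == v).
Proof.
rewrite -(sameP dvdz_mod0P eqP) -eqz_mod_dvd !modz_nat eqz_nat.
by rewrite !modn_small // -val_eqE.
Qed.

Lemma expr_modz_pred (r : int) : (0 <= r < n)%R ->
  x ^+ `|r| - x * x ^+ `|((r - 1) %% n)%Z| = (r == 0)%:R * (1 - x ^+ n).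
Proof.
case/andP=> r_ge0 r_lt; have [r0|r_neq0] := eqVneq r 0.
  rewrite r0 sub0r -modzDl modz_small; last by lia.
  by rewrite mul1r expr0 -exprS; have -> : `|n%:Z - 1|.+1 = n by lia.
rewrite modz_small; last by lia.
have -> : `|r|%N = `|r - 1|.+1 by lia.
by rewrite exprS subrr mul0r.
Qed.

Lemma circulant_sub_shift u v :
  circulant u v - x * circulant u (ordS v) = (u == v)%:R * (1 - x ^+ n).
Proof.
have n_gt0 := ord_gt0 u.
have shiftE : ((u%:Z - (ordS v)%:Z) %% n)%Z = ((((u%:Z - v%:Z) %% n)%Z - 1) %% n)%Z.
  by rewrite ordS_modz -modzDmr modzNm modzDmr opprD addrA modzDml.
rewrite !mxE shiftE expr_modz_pred ?modz_ord_sub_eq0 //.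
by rewrite modz_ge0 ?ltz_pmod // -lt0n.
Qed.

Lemma mul_circulant_shift :
  circulant *m (1%:M - x *: shift_mx) = (1 - x ^+ n)%:M.
Proof.
apply/matrixP => u w.
have shiftE : (circulant *m shift_mx) u w = circulant u (ordS w).
  by rewrite mxE -[RHS]sumr_mul_eq; apply: eq_bigr => v _; rewrite [shift_mx _ _]mxE.
rewrite mulmxBr mulmx1 -scalemxAr mx_subZE shiftE circulant_sub_shift.
by rewrite mxE mulr_natl.
Qed.

End Circulant.

Lemma det_circulant (R : comNzRingType) (x : R) n : (0 < n)%N ->
  \det (circulant x n) = (1 - x ^+ n) ^+ n.-1.
Proof.
case: n => // n _.
(* Right multiplication by the unitriangular 1 - x L, with L the shift without wrap-around,
   turns every column but the last into (1 - x^n) times a unit vector. *)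
pose L : 'M[R]_n.+1 := \matrix_(u, v) (u == v.+1 :> nat)%:R.
have L_trig : is_trig_mx (1%:M - x *: L).
  apply/is_trig_mxP => u v uv.
  by rewrite !mxE -val_eqE /= !ltn_eqF ?mulr0 ?subr0 // ltnW.
have det_E : \det (1%:M - x *: L) = 1.
  by rewrite det_trig // big1 // => u _; rewrite !mxE eqxx ltn_eqF ?mulr0 ?subr0.
have CL u v : (circulant x n.+1 *m L) u v =
    if (v < n)%N then circulant x n.+1 u (ordS v) else 0.
  rewrite mxE; case: ltnP => [v_lt|v_ge].
    rewrite -sumr_mul_eq; apply: eq_bigr => i _.
    by rewrite [L _ _]mxE -val_eqE /= modn_small.
  rewrite big1 // => i _; rewrite [L _ _]mxE ltn_eqF ?mulr0 //.
  by rewrite ltnS (leq_trans _ v_ge) // -ltnS.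
have CE u v : (circulant x n.+1 *m (1%:M - x *: L)) u v =
    if (v < n)%N then (u == v)%:R * (1 - x ^+ n.+1) else circulant x n.+1 u v.
  rewrite mulmxBr mulmx1 -scalemxAr mx_subZE CL.
  by case: ifP; rewrite ?circulant_sub_shift ?mulr0 ?subr0.
have := det_mulmx (circulant x n.+1) (1%:M - x *: L); rewrite det_E mulr1 => <-.
rewrite -det_tr det_trig; last first.
  apply/is_trig_mxP => u v uv; have u_lt := leq_trans uv (ltnSE (ltn_ord v)).
  by rewrite mxE CE u_lt -val_eqE /= gtn_eqF ?mul0r.
rewrite big_ord_recr /= mxE CE ltnn mxE subrr expr0 mulr1.
rewrite (eq_bigr (fun _ => 1 - x ^+ n.+1)) ?prodr_const ?card_ord // => u _.
by rewrite mxE CE /= ltn_ord eqxx mul1r.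
Qed.

Section ReindexedMatrices.
Variables (R : comNzRingType) (n : nat).
Implicit Types (A B : 'M[R]_n) (s t : 'S_n).

Lemma det_mxsub_perm s t A : \det (mxsub s t A) = (-1) ^+ s * (-1) ^+ t * \det A.
Proof.
rewrite mxsubrc -row_permEsub -col_permEsub row_permE col_permE.
by rewrite !det_mulmx !det_perm odd_permV mulrA mulrAC.
Qed.

Lemma mulmx_mxsub_perm s t A B : mxsub s t A *m mxsub t s B = mxsub s s (A *m B).
Proof.
apply/matrixP => i j; rewrite !mxE [RHS](reindex_perm t).
by apply: eq_bigr => k _; rewrite !mxE.
Qed.

Lemma mxsub_scalar_perm s (c : R) : mxsub s s c%:M = c%:M.
Proof. by apply/matrixP => i j; rewrite !mxE (inj_eq perm_inj). Qed.

Lemma det_mxsub_collision (f g : 'I_n -> 'I_n) A i1 i2 :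
  i1 != i2 -> f i1 = f i2 -> \det (mxsub f g A) = 0.
Proof. by move=> i12 f12; apply: (determinant_alternate i12) => j; rewrite !mxE f12. Qed.

End ReindexedMatrices.

Lemma invmx_eq (R : comUnitRingType) n (A B : 'M[R]_n) : A *m B = 1%:M -> invmx A = B.
Proof.
move=> AB; have [A_unit _] := mulmx1_unit AB.
by rewrite -[LHS]mulmx1 -AB mulmxA mulVmx // mul1mx.
Qed.

Lemma det_mxsub_mul_succ_ord (R : comNzRingType) n (A : 'M[R]_n) (b c : int) :
  (0 < n)%N -> ~~ coprimez (b * c) n ->
  \det (mxsub (mul_succ_ord b) (mul_succ_ord c) A) = 0.
Proof.
move=> n_gt0; rewrite coprimezMl negb_and.
case/orP=> /(mul_succ_ord_collision n_gt0)[i1 [i2 [i12 f12]]].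
  exact: det_mxsub_collision f12.
by rewrite -det_tr trmx_mxsub (det_mxsub_collision _ _ i12 f12).
Qed.

(** * The matrix Q *)

Section RealPowers.
Variable R : realType.

Lemma fracpart_divz (z : int) n : (0 < n)%N ->
  fracpart ((z%:~R : R) / n%:R) = `|(z %% n)%Z|%:R / n%:R.
Proof.
move=> n_gt0; have n_neq0 : (n%:R : R) != 0 by rewrite pnatr_eq0 -lt0n.
have zE : (z%:~R : R) / n%:R = (z %/ n)%Z%:~R + `|(z %% n)%Z|%:R / n%:R.
  rewrite {1}(divz_eq z n) -[`|_|%:R]/(`|(z %% n)%Z|%:Z%:~R) absz_modz //.
  by rewrite rmorphD rmorphM /= mulrDl mulfK.
have floorE : Num.floor ((z%:~R : R) / n%:R) = (z %/ n)%Z.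
  apply: floor_def; rewrite zE lerDl divr_ge0 //= rmorphD /= ltrD2l.
  by rewrite ltr_pdivrMr ?ltr0n // mul1r ltr_nat absz_modz_lt.
by rewrite /fracpart floorE zE addrC addKr.
Qed.

Lemma powR_fracpart (q : R) (z : int) n : (0 < n)%N -> 0 <= q ->
  q `^ (- fracpart ((z%:~R : R) / n%:R)) = (q `^ (- n%:R^-1)) ^+ `|(z %% n)%Z|.
Proof.
by move=> n_gt0 q_ge0; rewrite fracpart_divz // -mulrN mulrC powRrM powR_mulrn ?powR_ge0.
Qed.

Lemma powR_inv_root (q : R) n : (0 < n)%N -> 0 <= q -> (q `^ (- n%:R^-1)) ^+ n = q^-1.
Proof.
move=> n_gt0 q_ge0; rewrite -powR_mulrn ?powR_ge0 // -powRrM mulNr mulVf ?powR_inv1 //.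
by rewrite pnatr_eq0 -lt0n.
Qed.

End RealPowers.

Lemma Qmat_mxsub (R : realType) n a (q : R) : 0 <= q ->
  Qmat n a q =
  mxsub (mul_succ_ord a) (mul_succ_ord (a + 1)) (circulant (q `^ (- n%:R^-1)) n).
Proof.
move=> q_ge0; apply/matrixP => j k; have n_gt0 := ord_gt0 j.
rewrite !mxE powR_fracpart //; congr (_ ^+ _); apply/eqP.
rewrite -eqz_nat !absz_modz //; apply/eqP.
by rewrite [RHS]modzDml -[RHS]modzDmr modzNm modzDmr.
Qed.

Lemma fmat_mxsub (R : realType) n a (q : R) :
  fmat n a q =
  mxsub (mul_succ_ord (a + 1)) (mul_succ_ord a) (1%:M - q `^ (- n%:R^-1) *: shift_mx R n).
Proof.
apply/matrixP => j k; rewrite !mxE; congr (_%:R - _ * _%:R).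
  by rewrite -eqz_mod_dvd -(inj_eq (@ord_inj n)) -eqz_nat !mul_succ_ordE.
rewrite -addrA -opprD -eqz_mod_dvd -(inj_eq (@ord_inj n)) -eqz_nat ordS_modz.
by rewrite !mul_succ_ordE modzDml.
Qed.

Theorem proposition2p1 (R : realType) (n : nat) (a : int) (q : R) :
  odd n -> 0 < q -> q != 1 ->
  \det (Qmat n a q) = (jacobi (a * (a + 1)) n)%:~R * (1 - q^-1) ^+ n.-1 /\
  (coprimez (a * (a + 1)) n%:Z ->
     invmx (Qmat n a q) = (1 - q^-1)^-1 *: fmat n a q).
Proof.
move=> n_odd q_gt0 q_neq1; have n_gt0 := odd_gt0 n_odd.
rewrite Qmat_mxsub ?ltW // fmat_mxsub; set x := q `^ _.
have xn : x ^+ n = q^-1 by rewrite powR_inv_root ?ltW.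
rewrite -xn; have [coprime_aa1|not_coprime] := boolP (coprimez (a * (a + 1)) n); last first.
  by split=> //; rewrite jacobi_eq0 // mul0r det_mxsub_mul_succ_ord.
have /andP[coprime_a coprime_a1] : coprimez a n && coprimez (a + 1) n by rewrite -coprimezMl.
rewrite (eq_mxsub _ _ (mul_succ_ord_perm coprime_a) (mul_succ_ord_perm coprime_a1)).
rewrite (eq_mxsub _ _ (mul_succ_ord_perm coprime_a1) (mul_succ_ord_perm coprime_a)).
split=> [|_].
  rewrite det_mxsub_perm det_circulant // jacobi_zmul_perm // !odd_permM.
  by rewrite odd_succ_perm // rmorphM /= !rmorph_sign.
apply: invmx_eq; rewrite -scalemxAr mulmx_mxsub_perm mul_circulant_shift mxsub_scalar_perm.
by rewrite scale_scalar_mx mulVf // xn subr_eq0 eq_sym invr_eq1.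
Qed.
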